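(* Consider an episodic RMDP with horizon $H$, rewards $R_h:\mathcal{S}\times\mathcal{A}\to[0,1]$, and $\mathcal{S}\times\mathcal{A}$-rectangular total-variation robust sets of radius $\rho\in[0,1)$. Then for any collection of transition kernels $P=\{P_h\}_{h=1}^H$, any Markov policy $\pi$, and any step $h\in[H]$, $$\max_{(s,a)}Q^\pi_{h,P,\boldsymbol{\Phi}}(s,a)-\min_{(s,a)}Q^\pi_{h,P,\boldsymbol{\Phi}}(s,a)\le\min\{H,\rho^{-1}\},\qquad \max_{s}V^\pi_{h,P,\boldsymbol{\Phi}}(s)-\min_{s}V^\pi_{h,P,\boldsymbol{\Phi}}(s)\le\min\{H,\rho^{-1}\}.$$
   Context: $\mathcal{S},\mathcal{A}$ finite. For a kernel $P_h$ the TV robust set is $\boldsymbol{\Phi}(P_h)=\bigotimes_{(s,a)}\mathcal{P}_\rho(s,a;P_h)$, $\mathcal{P}_\rho(s,a;P_h)=\{\widetilde P\in\Delta(\mathcal{S}):\frac12\sum_{s'}|\widetilde P(s')-P_h(s'|s,a)|\le\rho\}$. For a Markov policy $\pi=\{\pi_h\}$, $\pi_h:\mathcal{S}\to\Delta(\mathcal{A})$, the robust value functions are $V^\pi_{h,P,\boldsymbol{\Phi}}(s)=\inf\mathbb{E}_{\{\widetilde P_i\},\pi}[\sum_{i=h}^HR_i(s_i,a_i)\mid s_h=s]$ and $Q^\pi_{h,P,\boldsymbol{\Phi}}(s,a)=\inf\mathbb{E}_{\{\widetilde P_i\},\pi}[\sum_{i=h}^HR_i(s_i,a_i)\mid s_h=s,a_h=a]$,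 infima over all choices $\widetilde P_i(\cdot|s',a')\in\mathcal{P}_\rho(s',a';P_i)$. $\rho^{-1}=\infty$ when $\rho=0$. *)

From HB Require Import structures.
From mathcomp Require Import all_boot all_order all_algebra.
From mathcomp Require Import all_classical all_reals.
From mathcomp Require Import ereal.
Set Implicit Arguments. Unset Strict Implicit. Unset Printing Implicit Defensive.
Import Order.TTheory GRing.Theory Num.Theory.
Local Open Scope classical_set_scope.
Local Open Scope ring_scope.

Section RMDP.
Variables (R : realType) (S A : finType).

Definition is_dist (T : finType) (p : T -> R) : Prop :=
  (forall t, 0 <= p t) /\ \sum_(t : T) p t = 1.

Definition tv_ball (rho : R) (p q : S -> R) : Prop :=
  is_dist q /\ 2^-1 * \sum_(s' : S) `|q s' - p s'| <= rho.

Definition robust_choice (H : nat) (rho : R) (P Pt : nat -> S -> A -> S -> R) : Prop :=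
  forall i, (1 <= i <= H)%N -> forall s a, tv_ball rho (P i s a) (Pt i s a).

(* expectation of sum_{i=h}^{h+n-1} R_i(s_i,a_i) given s_h = s, under policy pi
   and kernels Pt, computed by backward recursion *)
Fixpoint vrec (Rw : nat -> S -> A -> R) (pi : nat -> S -> A -> R)
  (Pt : nat -> S -> A -> S -> R) (n h : nat) (s : S) : R :=
  match n with
  | O => 0
  | n'.+1 => \sum_(a : A) pi h s a *
       (Rw h s a + \sum_(s' : S) Pt h s a s' * vrec Rw pi Pt n' h.+1 s')
  end.

Definition Vval H Rw pi Pt (h : nat) (s : S) : R := vrec Rw pi Pt (H.+1 - h) h s.
Definition Qval H Rw pi Pt (h : nat) (s : S) (a : A) : R :=
  Rw h s a + \sum_(s' : S) Pt h s a s' * vrec Rw pi Pt (H - h) h.+1 s'.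

Definition robustV H rho P Rw pi (h : nat) (s : S) : R :=
  inf [set v | exists Pt, robust_choice H rho P Pt /\ v = Vval H Rw pi Pt h s].
Definition robustQ H rho P Rw pi (h : nat) (s : S) (a : A) : R :=
  inf [set v | exists Pt, robust_choice H rho P Pt /\ v = Qval H Rw pi Pt h s a].

End RMDP.

Definition minHrhoinv (R : realType) (H : nat) (rho : R) : \bar R :=
  mine (H%:R)%:E (if rho == 0 then +oo%E else (rho^-1)%:E).

From HB Require Import structures.
From mathcomp Require Import all_boot all_order all_algebra.
From mathcomp Require Import all_classical all_reals.
From mathcomp Require Import ereal.
From mathcomp Require Import zify ring.
Set Implicit Arguments. Unset Strict Implicit. Unset Printing Implicit Defensive.
Import Order.TTheory GRing.Theory Num.Theory.
Local Open Scope classical_set_scope.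
Local Open Scope ring_scope.

(* The robust values satisfy a Bellman recursion in which the next-step value
   w is averaged against the worst distribution of the TV ball around
   P_h(s, a); by rectangularity the adversary may minimise separately at every
   (h, s, a).  If w has span at most c, the mixture (1 - rho) P_h(s, a) +
   rho delta_t lies in the ball for every state t, so the worst case is at most
   w t + (1 - rho) c, i.e. at most (1 - rho) c above min w.  With rewards in
   [0, 1] one backward step turns a span bound c into 1 + (1 - rho) c, and
   starting from 0 these bounds stay below both n and 1 / rho. *)

Section real_facts.
Variable R : realType.

Lemma inf_eq_approx (E : set R) m : lbound E m ->
  (forall e, 0 < e -> exists2 x, E x & x <= m + e) -> inf E = m.
Proof.
move=> Em approx; have [x Ex _] := approx 1 ltr01.
apply/le_anti; rewrite lb_le_inf ?andbT; [|by exists x|by []].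
apply/ler_addgt0Pr => e e0; have [y Ey ye] := approx e e0.
by apply: le_trans ye; apply: ge_inf => //; exists m.
Qed.

Lemma natr_mul_div_le (e : R) k N : 0 <= e -> (k <= N.+1)%N ->
  k%:R * (e / N.+1%:R) <= e.
Proof.
move=> e0 kN; apply: le_trans (_ : N.+1%:R * (e / N.+1%:R) <= e).
  by rewrite ler_wpM2r ?divr_ge0 ?ler_nat.
by rewrite mulrCA mulfV ?mulr1 ?pnatr_eq0.
Qed.

End real_facts.

Section dist_sum.
Variables (R : realType) (T : finType).
Implicit Types (q f g : T -> R) (c : R).

Lemma dist_sum_addr q f c : is_dist q ->
  \sum_t q t * (f t + c) = \sum_t q t * f t + c.
Proof.
move=> [_ q1]; under eq_bigr do rewrite mulrDr.
by rewrite big_split /= -mulr_suml q1 mul1r.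
Qed.

Lemma dist_sum_ler q f g : (forall t, 0 <= q t) -> (forall t, f t <= g t) ->
  \sum_t q t * f t <= \sum_t q t * g t.
Proof. by move=> q0 fg; apply: ler_sum => t _; apply: ler_wpM2l. Qed.

Lemma dist_sum_const q c : is_dist q -> \sum_t q t * c = c.
Proof. by move=> [_ q1]; rewrite -mulr_suml q1 mul1r. Qed.

Lemma dist_sum_le_const q f c : is_dist q -> (forall t, f t <= c) ->
  \sum_t q t * f t <= c.
Proof.
move=> qd fc; rewrite -[leRHS](dist_sum_const c qd).
by apply: dist_sum_ler => //; case: qd.
Qed.

Lemma dist_sum_ge_const q f c : is_dist q -> (forall t, c <= f t) ->
  c <= \sum_t q t * f t.
Proof.
move=> qd fc; rewrite -[leLHS](dist_sum_const c qd).
by apply: dist_sum_ler => //; case: qd.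
Qed.

Lemma dist_sum_le_add q q' f g c : is_dist q -> is_dist q' ->
  (forall t t', f t <= g t' + c) -> \sum_t q t * f t <= \sum_t q' t * g t + c.
Proof.
move=> qd q'd fg; apply: dist_sum_le_const => // t.
by rewrite -lerBlDr; apply: dist_sum_ge_const => // t'; rewrite lerBlDr.
Qed.

Lemma sup_sub_inf_range_le f c : 0 <= c -> (forall x y, f x <= f y + c) ->
  sup (range f) - inf (range f) <= c.
Proof.
move=> c0 fc; case: (pickP (@predT T)) => [x0 _|T0]; last first.
  have -> : range f = set0 by apply/seteqP; split => // y [x _ _]; have := T0 x.
  by rewrite sup0 inf0 subr0.
have ne : range f !=set0 by exists (f x0), x0.
rewrite lerBlDl; apply: ge_sup => // _ [x _ <-].
rewrite -lerBlDr; apply: lb_le_inf => // _ [y _ <-].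
by rewrite lerBlDr.
Qed.

End dist_sum.

Section tv_ball.
Variables (R : realType) (S : finType) (rho : R).
Hypotheses (rho_ge0 : 0 <= rho) (rho_le1 : rho <= 1).
Implicit Types (p q w : S -> R).

Definition tv_inf p w : R := inf [set \sum_s q s * w s | q in tv_ball rho p].

Lemma tv_ball_refl p : is_dist p -> tv_ball rho p p.
Proof.
by move=> pd; split => //; rewrite big1 ?mulr0 // => s _; rewrite subrr normr0.
Qed.

Lemma tv_ball_mix_dirac p t : is_dist p ->
  tv_ball rho p (fun s => (1 - rho) * p s + rho * (s == t)%:R).
Proof.
move=> [p0 p1]; have rho'_ge0 : 0 <= 1 - rho by rewrite subr_ge0.
have dirac1 : \sum_s ((s == t)%:R : R) = 1.
  by rewrite (bigD1 t) //= eqxx big1 ?addr0 // => s /negbTE ->.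
split; first split.
- by move=> s; rewrite addr_ge0 // mulr_ge0.
- by rewrite big_split /= -!mulr_sumr p1 dirac1 !mulr1 subrK.
apply: le_trans (_ : 2^-1 * (rho * 2) <= _); last first.
  by rewrite mulrCA mulVf ?mulr1 // pnatr_eq0.
rewrite ler_wpM2l ?invr_ge0 ?ler0n //.
apply: le_trans (_ : \sum_s rho * ((s == t)%:R + p s) <= _); last first.
  by rewrite -mulr_sumr big_split /= dirac1 p1.
apply: ler_sum => s _.
have -> : (1 - rho) * p s + rho * (s == t)%:R - p s = rho * ((s == t)%:R - p s)
  by ring.
rewrite normrM ger0_norm // ler_wpM2l //; apply: le_trans (ler_normB _ _) _.
by rewrite ger0_norm ?ler0n // ger0_norm.
Qed.

Lemma tv_values_neq0 p w : is_dist p ->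
  [set \sum_s q s * w s | q in tv_ball rho p] !=set0.
Proof. by move=> pd; exists (\sum_s p s * w s), p => //; apply: tv_ball_refl. Qed.

Lemma tv_inf_ge p w m : is_dist p -> (forall s, m <= w s) -> m <= tv_inf p w.
Proof.
move=> pd wm; apply: lb_le_inf; first exact: tv_values_neq0.
by move=> _ [q [qd _] <-]; apply: dist_sum_ge_const.
Qed.

Lemma tv_inf_le p q w : tv_ball rho p q -> tv_inf p w <= \sum_s q s * w s.
Proof.
move=> pq; apply: ge_inf; last by exists q.
exists (- \sum_s `|w s|) => _ [q' [q'd _] <-]; apply: dist_sum_ge_const => // s.
rewrite lerNl; apply: le_trans (ler_norm _) _; rewrite normrN.
by rewrite (bigD1 s) //= lerDl sumr_ge0.
Qed.

Lemma tv_inf_approx p w e : is_dist p -> 0 < e ->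
  exists2 q, tv_ball rho p q & \sum_s q s * w s <= tv_inf p w + e.
Proof.
move=> pd e0; have lt : tv_inf p w < tv_inf p w + e by rewrite ltrDl.
have [_ [q pq <-] qw] := inf_lt (tv_values_neq0 w pd) lt.
by exists q => //; apply: ltW.
Qed.

Lemma tv_inf_le_mix p w t : is_dist p ->
  tv_inf p w <= (1 - rho) * \sum_s p s * w s + rho * w t.
Proof.
move=> pd; apply: le_trans (tv_inf_le w (tv_ball_mix_dirac t pd)) _.
have dirac : \sum_s (s == t)%:R * w s = w t.
  rewrite (bigD1 t) //= eqxx mul1r big1 ?addr0 // => s /negbTE ->.
  by rewrite mul0r.
rewrite (eq_bigr (fun s => (1 - rho) * (p s * w s) + rho * ((s == t)%:R * w s))).
  by rewrite big_split /= -!mulr_sumr dirac.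
by move=> s _; ring.
Qed.

Lemma tv_inf_le_add p p' w c : is_dist p -> is_dist p' ->
  (forall s t, w s <= w t + c) -> tv_inf p w <= tv_inf p' w + (1 - rho) * c.
Proof.
move=> pd p'd wc; rewrite -lerBlDr; apply: tv_inf_ge => // t; rewrite lerBlDr.
apply: le_trans (tv_inf_le_mix w t pd) _.
have rho'_ge0 : 0 <= 1 - rho by rewrite subr_ge0.
have : \sum_s p s * w s <= w t + c by apply: dist_sum_le_const => // s; apply: wc.
move=> /(ler_wpM2l rho'_ge0) pw.
apply: le_trans (lerD pw (lexx _)) _.
by rewrite mulrDr addrAC -mulrDl subrK mul1r.
Qed.

End tv_ball.

Section span_bound.
Variables (R : realType) (rho : R).
Hypotheses (rho_ge0 : 0 <= rho) (rho_lt1 : rho < 1).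

Fixpoint span_bound n : R :=
  if n is n'.+1 then 1 + (1 - rho) * span_bound n' else 0.

Lemma span_bound_ge0 n : 0 <= span_bound n.
Proof.
by elim: n => //= n IH; rewrite addr_ge0 // mulr_ge0 // subr_ge0 ltW.
Qed.

Lemma span_bound_le_nat n : span_bound n <= n%:R.
Proof.
elim: n => //= n IH; rewrite -natr1 addrC lerD2r.
apply: le_trans IH; rewrite -[leRHS]mul1r ler_wpM2r ?span_bound_ge0 //.
by rewrite lerBlDr lerDl.
Qed.

Lemma span_bound_le_inv n : rho * span_bound n <= 1.
Proof.
elim: n => /= [|n IH]; first by rewrite mulr0.
rewrite mulrDr mulr1 mulrCA.
apply: le_trans (_ : rho + (1 - rho) * 1 <= 1); last by rewrite mulr1 addrC subrK.
by rewrite lerD2l ler_wpM2l // subr_ge0 ltW.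
Qed.

Lemma span_bound_le_minHrhoinv H n : (n <= H)%N ->
  ((span_bound n)%:E <= minHrhoinv H rho)%E.
Proof.
move=> nH; rewrite /minHrhoinv le_min lee_fin; apply/andP; split.
  by apply: le_trans (span_bound_le_nat n) _; rewrite ler_nat.
case: eqP => [_|/eqP rho_neq0]; first exact: leey.
rewrite lee_fin -[span_bound n](mulKf rho_neq0) -[leRHS]mulr1.
by rewrite ler_wpM2l ?invr_ge0 ?span_bound_le_inv.
Qed.

Lemma range_spread_le_minHrhoinv (T : finType) (f : T -> R) H n : (n <= H)%N ->
  (forall x y, f x <= f y + span_bound n) ->
  ((sup (range f) - inf (range f))%:E <= minHrhoinv H rho)%E.
Proof.
move=> nH fn; apply: le_trans (span_bound_le_minHrhoinv nH).
by rewrite lee_fin sup_sub_inf_range_le ?span_bound_ge0.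
Qed.

End span_bound.

Section robust_bellman.
Variables (R : realType) (S A : finType) (H : nat) (rho : R)
  (Rw : nat -> S -> A -> R) (P : nat -> S -> A -> S -> R)
  (pi : nat -> S -> A -> R).
Hypotheses (rho_ge0 : 0 <= rho) (rho_lt1 : rho < 1)
  (Rw01 : forall i s a, (1 <= i <= H)%N -> 0 <= Rw i s a <= 1)
  (P_dist : forall i s a, (1 <= i <= H)%N -> is_dist (P i s a))
  (pi_dist : forall i s, (1 <= i <= H)%N -> is_dist (pi i s)).

Let rho_le1 : rho <= 1. Proof. exact: ltW. Qed.

Fixpoint robust_vrec (n i : nat) (s : S) : R :=
  if n is n'.+1 then
    \sum_(a : A) pi i s a * (Rw i s a + tv_inf rho (P i s a) (robust_vrec n' i.+1))
  else 0.

Definition robust_qrec n i s a : R :=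
  Rw i s a + tv_inf rho (P i s a) (robust_vrec n i.+1).

Lemma robust_vrecS n i s :
  robust_vrec n.+1 i s = \sum_a pi i s a * robust_qrec n i s a.
Proof. by []. Qed.

Lemma robust_qrec_span n i : (1 <= i <= H)%N ->
  (forall s t, robust_vrec n i.+1 s <= robust_vrec n i.+1 t + span_bound rho n) ->
  forall s a t b, robust_qrec n i s a <= robust_qrec n i t b + span_bound rho n.+1.
Proof.
move=> iH vspan s a t b; rewrite /robust_qrec /= addrACA.
have /andP[_ Rsa_le1] := Rw01 s a iH; have /andP[Rtb_ge0 _] := Rw01 t b iH.
apply: lerD; first by rewrite -[leLHS]add0r lerD.
by apply: tv_inf_le_add => //; apply: P_dist.
Qed.

Lemma robust_vrec_span n i : (1 <= i)%N -> (i + n <= H.+1)%N ->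
  forall s t, robust_vrec n i s <= robust_vrec n i t + span_bound rho n.
Proof.
elim: n i => [|n IH] i i_ge1 inH s t; first by rewrite addr0.
have iH : (1 <= i <= H)%N by lia.
rewrite !robust_vrecS; apply: dist_sum_le_add; try exact: pi_dist.
by move=> a b; apply: robust_qrec_span => //; apply: IH; lia.
Qed.

Lemma robust_qrec_le Pt n i s a : robust_choice H rho P Pt -> (1 <= i <= H)%N ->
  (forall s', robust_vrec n i.+1 s' <= vrec Rw pi Pt n i.+1 s') ->
  robust_qrec n i s a <= Rw i s a + \sum_s' Pt i s a s' * vrec Rw pi Pt n i.+1 s'.
Proof.
move=> adm iH vle; rewrite lerD2l; have [[Pt_ge0 _] _] := adm i iH s a.
by apply: le_trans (tv_inf_le _ (adm i iH s a)) _; apply: dist_sum_ler.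
Qed.

Lemma robust_vrec_le Pt n i : robust_choice H rho P Pt ->
  (1 <= i)%N -> (i + n <= H.+1)%N ->
  forall s, robust_vrec n i s <= vrec Rw pi Pt n i s.
Proof.
move=> adm; elim: n i => [|n IH] i i_ge1 inH s //=.
have iH : (1 <= i <= H)%N by lia.
apply: dist_sum_ler; first by case: (pi_dist s iH).
by move=> a; apply: robust_qrec_le => //; apply: IH; lia.
Qed.

Definition near_optimal e Pt := forall i s a, (1 <= i <= H)%N ->
  \sum_s' Pt i s a s' * robust_vrec (H - i) i.+1 s'
    <= tv_inf rho (P i s a) (robust_vrec (H - i) i.+1) + e.

Lemma exists_near_optimal e : 0 < e ->
  exists2 Pt, robust_choice H rho P Pt & near_optimal e Pt.
Proof.
move=> e0.
have : forall x : nat * S * A, exists q, let: (i, s, a) := x in (1 <= i <= H)%N ->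
    tv_ball rho (P i s a) q /\
    \sum_s' q s' * robust_vrec (H - i) i.+1 s'
      <= tv_inf rho (P i s a) (robust_vrec (H - i) i.+1) + e.
  move=> [[i s] a]; case: (boolP (1 <= i <= H)%N) => [iH|_]; last by exists (P i s a).
  have [q] := tv_inf_approx rho_ge0 (robust_vrec (H - i) i.+1) (P_dist s a iH) e0.
  by exists q.
move=> /choice [f opt]; exists (fun i s a => f (i, s, a)).
  by move=> i iH s a; case: (opt (i, s, a) iH).
by move=> i s a iH; case: (opt (i, s, a) iH).
Qed.

Lemma near_optimal_qrec Pt e c i s a : robust_choice H rho P Pt ->
  near_optimal e Pt -> (1 <= i <= H)%N ->
  (forall s', vrec Rw pi Pt (H - i) i.+1 s' <= robust_vrec (H - i) i.+1 s' + c) ->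
  Rw i s a + \sum_s' Pt i s a s' * vrec Rw pi Pt (H - i) i.+1 s'
    <= robust_qrec (H - i) i s a + (e + c).
Proof.
move=> adm opt iH vle; rewrite /robust_qrec -addrA lerD2l addrA.
have Pt_dist : is_dist (Pt i s a) by case: (adm i iH s a).
apply: le_trans (_ : \sum_s' Pt i s a s' * (robust_vrec (H - i) i.+1 s' + c) <= _).
  by apply: dist_sum_ler => //; case: Pt_dist.
by rewrite dist_sum_addr // lerD2r; apply: opt.
Qed.

Lemma vrec_le_near_optimal Pt e n i : robust_choice H rho P Pt ->
  near_optimal e Pt -> (1 <= i)%N -> (i + n = H.+1)%N ->
  forall s, vrec Rw pi Pt n i s <= robust_vrec n i s + n%:R * e.
Proof.
move=> adm opt; elim: n i => [|n IH] i i_ge1 inH s /=; first by rewrite mul0r addr0.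
have iH : (1 <= i <= H)%N by lia.
have Hi : (H - i)%N = n by lia.
rewrite -(dist_sum_addr _ _ (pi_dist s iH)); apply: dist_sum_ler.
  by case: (pi_dist s iH).
move=> a; rewrite -natr1 mulrDl mul1r [_ + e]addrC -Hi.
by apply: near_optimal_qrec => // s'; rewrite Hi; apply: IH; lia.
Qed.

Lemma robustV_eq h s : (1 <= h <= H)%N ->
  robustV H rho P Rw pi h s = robust_vrec (H.+1 - h) h s.
Proof.
move=> hH; apply: inf_eq_approx => [_ [Pt [adm ->]]|e e0].
  by apply: robust_vrec_le => //; lia.
have e'0 : 0 < e / H.+1%:R by rewrite divr_gt0 ?ltr0n.
have [Pt adm opt] := exists_near_optimal e'0.
exists (Vval H Rw pi Pt h s); first by exists Pt.
apply: le_trans (vrec_le_near_optimal adm opt _ _ s) _; try lia.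
by rewrite lerD2l natr_mul_div_le ?ltW //; lia.
Qed.

Lemma robustQ_eq h s a : (1 <= h <= H)%N ->
  robustQ H rho P Rw pi h s a = robust_qrec (H - h) h s a.
Proof.
move=> hH; apply: inf_eq_approx => [_ [Pt [adm ->]]|e e0].
  by apply: robust_qrec_le => // s'; apply: robust_vrec_le => //; lia.
set e' := e / H.+1%:R; have e'0 : 0 < e' by rewrite divr_gt0 ?ltr0n.
have [Pt adm opt] := exists_near_optimal e'0.
exists (Qval H Rw pi Pt h s a); first by exists Pt.
apply: le_trans (near_optimal_qrec (c := (H - h)%:R * e') s a adm opt hH _) _.
  by move=> s'; apply: vrec_le_near_optimal => //; lia.
rewrite lerD2l -[X in X + _ <= _]mul1r -mulrDl nat1r natr_mul_div_le ?ltW //; lia.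
Qed.

Lemma robustQ_spread h : (1 <= h <= H)%N ->
  ((sup (range (fun sa : S * A => robustQ H rho P Rw pi h sa.1 sa.2))
    - inf (range (fun sa : S * A => robustQ H rho P Rw pi h sa.1 sa.2)))%:E
     <= minHrhoinv H rho)%E.
Proof.
move=> hH; have nH : ((H - h).+1 <= H)%N by lia.
apply: (range_spread_le_minHrhoinv rho_ge0 rho_lt1 nH).
move=> [s a] [t b] /=; rewrite !robustQ_eq //.
by apply: robust_qrec_span => // s' t'; apply: robust_vrec_span; lia.
Qed.

Lemma robustV_spread h : (1 <= h <= H)%N ->
  ((sup (range (fun s : S => robustV H rho P Rw pi h s))
    - inf (range (fun s : S => robustV H rho P Rw pi h s)))%:E
     <= minHrhoinv H rho)%E.
Proof.
move=> hH; have nH : (H.+1 - h <= H)%N by lia.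
apply: (range_spread_le_minHrhoinv rho_ge0 rho_lt1 nH).
by move=> s t; rewrite !robustV_eq //; apply: robust_vrec_span; lia.
Qed.

End robust_bellman.

Theorem proposition4 (R : realType) (S A : finType) (H : nat) (rho : R)
  (Rw : nat -> S -> A -> R) (P : nat -> S -> A -> S -> R)
  (pi : nat -> S -> A -> R) (h : nat) :
  0 <= rho -> rho < 1 ->
  (forall i s a, (1 <= i <= H)%N -> 0 <= Rw i s a <= 1) ->
  (forall i s a, (1 <= i <= H)%N -> is_dist (P i s a)) ->
  (forall i s, (1 <= i <= H)%N -> is_dist (pi i s)) ->
  (1 <= h <= H)%N ->
  ((sup (range (fun sa : S * A => robustQ H rho P Rw pi h sa.1 sa.2))
    - inf (range (fun sa : S * A => robustQ H rho P Rw pi h sa.1 sa.2)))%:E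
     <= minHrhoinv H rho)%E /\
  ((sup (range (fun s : S => robustV H rho P Rw pi h s))
    - inf (range (fun s : S => robustV H rho P Rw pi h s)))%:E
     <= minHrhoinv H rho)%E.
Proof.
move=> rho_ge0 rho_lt1 Rw01 P_dist pi_dist hH.
by split; [apply: robustQ_spread | apply: robustV_spread].
Qed.
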